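(* Let $(z,x)$ be a feasible solution of the cluster LP on a finite vertex set $V$, and define $y_{uv}=\sum_{S\supseteq\{u,v\}}z_S$ and $y_{uvw}=\sum_{S\supseteq\{u,v,w\}}z_S$ for all $u,v,w\in V$ (not necessarily distinct; so $y_{uu}=1$). Let $I_1,\dots,I_t$ be a partition of $[0,1]$ into intervals. Fix $u\in V$ and define $Q_u\in\mathbb R^{t\times t}$ by $$Q_u(I_j,I_k)=\sum_{v,w\in V:\ y_{uv}\in I_j,\ y_{uw}\in I_k}\big(y_{uvw}-y_{uv}y_{uw}\big).$$ Then $Q_u$ is positive semidefinite.
   Context: The cluster LP for a finite vertex set $V$ has a variable $z_S$ for every nonempty $S\subseteq V$ and $x_{uv}$ for every unordered pair $uv$ of distinct vertices, with constraints $\sum_{S\ni u}z_S=1$ for all $u\in V$, $\sum_{S\supseteq\{u,v\}}z_S=1-x_{uv}$ for all $uv$, and $z_S\ge0$. *)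

From mathcomp Require Import all_boot all_order all_algebra.
Set Implicit Arguments. Unset Strict Implicit. Unset Printing Implicit Defensive.
Import Order.TTheory GRing.Theory Num.Theory.
Local Open Scope ring_scope.

(* Variables z_S for nonempty S are
   encoded by z : {set V} -> R (the value at set0 is never used), and
   x_{uv} for unordered pairs of distinct vertices by a function x. *)
Definition cluster_LP_feasible (R : realFieldType) (V : finType)
    (z : {set V} -> R) (x : V -> V -> R) : Prop :=
  [/\ forall S : {set V}, S != set0 -> 0 <= z S,
      forall u : V, \sum_(S : {set V} | u \in S) z S = 1,
      forall u v : V, u != v -> x u v = x v u &
      forall u v : V, u != v ->
        \sum_(S : {set V} | (u \in S) && (v \in S)) z S = 1 - x u v].

Definition y2 (R : realFieldType) (V : finType) (z : {set V} -> R) (u v : V) : R :=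
  \sum_(S : {set V} | (u \in S) && (v \in S)) z S.

Definition y3 (R : realFieldType) (V : finType) (z : {set V} -> R) (u v w : V) : R :=
  \sum_(S : {set V} | [&& u \in S, v \in S & w \in S]) z S.

Definition interval_partition01 (R : realFieldType) (t : nat)
    (I : 'I_t -> interval R) : Prop :=
  (forall j (r : R), r \in I j -> r \in `[0, 1]) /\
  (forall r : R, r \in `[0, 1] -> exists! j, r \in I j).

Definition Qmat (R : realFieldType) (V : finType) (z : {set V} -> R) (t : nat)
    (I : 'I_t -> interval R) (u : V) : 'M[R]_t :=
  \matrix_(j < t, k < t)
    \sum_(v : V | y2 z u v \in I j) \sum_(w : V | y2 z u w \in I k)
       (y3 z u v w - y2 z u v * y2 z u w).

Definition psd (R : realFieldType) (n : nat) (M : 'M[R]_n) : Prop :=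
  M^T = M /\ forall c : 'cV[R]_n, 0 <= (c^T *m M *m c) 0 0.

From mathcomp Require Import all_boot all_order all_algebra.
From mathcomp Require Import ring.
Set Implicit Arguments. Unset Strict Implicit. Unset Printing Implicit Defensive.
Import Order.TTheory GRing.Theory Num.Theory.
Local Open Scope ring_scope.

(* Since the z_S with u in S form a probability distribution, for any weights
   a on V the form sum_(v,w) a_v a_w (y_uvw - y_uv y_uw) is the variance of
   S |-> a(S) = sum_(v in S) a_v under it, hence nonnegative.  The quadratic
   form of Q_u at c is this form for a_v = sum of the c_j with y_uv in I_j. *)

Section WeightedVariance.
Variables (R : realFieldType) (I : finType) (P : pred I) (p f : I -> R).

Lemma weighted_variance :
  \sum_(i | P i) p i = 1 ->
  \sum_(i | P i) p i * (f i - \sum_(j | P j) p j * f j) ^+ 2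
    = \sum_(i | P i) p i * f i ^+ 2 - (\sum_(i | P i) p i * f i) ^+ 2.
Proof.
set m := \sum_(j | P j) p j * f j => p_sum1.
have -> : \sum_(i | P i) p i * (f i - m) ^+ 2 =
    \sum_(i | P i) p i * f i ^+ 2 - (\sum_(i | P i) p i * f i) * (2 * m)
    + (\sum_(i | P i) p i) * m ^+ 2.
  by rewrite !big_distrl -sumrB -big_split /=; apply: eq_bigr => i _; ring.
by rewrite -/m p_sum1; ring.
Qed.

End WeightedVariance.

Section ClusterMoments.
Variables (R : realFieldType) (V : finType) (z : {set V} -> R) (u : V).

Definition ycov (v w : V) : R := y3 z u v w - y2 z u v * y2 z u w.

Lemma ycovC (v w : V) : ycov v w = ycov w v.
Proof.
rewrite /ycov /y3 mulrC; congr (_ - _); apply: eq_bigl => S.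
by case: (v \in S); case: (w \in S); rewrite ?andbF.
Qed.

Variable a : V -> R.

Lemma first_moment_y2 :
  \sum_(S : {set V} | u \in S) z S * (\sum_(v in S) a v) = \sum_v a v * y2 z u v.
Proof.
under eq_bigr do rewrite big_distrr.
rewrite /y2 (exchange_big_dep predT) //=.
apply: eq_bigr => v _; rewrite big_distrr /=.
apply: eq_big => [S|S _]; first by rewrite andbC.
by rewrite mulrC.
Qed.

Lemma second_moment_y3 :
  \sum_(S : {set V} | u \in S) z S * (\sum_(v in S) a v) ^+ 2
    = \sum_v \sum_w a v * a w * y3 z u v w.
Proof.
under eq_bigr do rewrite expr2 big_distrl /= big_distrr /=.
under eq_bigr do under eq_bigr do rewrite big_distrr /=.
rewrite (exchange_big_dep predT) //=; apply: eq_bigr => v _.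
under eq_bigr do rewrite big_distrr /=.
rewrite (exchange_big_dep predT) //=; apply: eq_bigr => w _.
rewrite /y3 big_distrr /=.
apply: eq_big => [S|S _]; last by rewrite mulrC.
by case: (u \in S); case: (v \in S); case: (w \in S).
Qed.

Lemma ycov_form_variance :
  \sum_(S : {set V} | u \in S) z S = 1 ->
  \sum_v \sum_w a v * a w * ycov v w
    = \sum_(S : {set V} | u \in S) z S *
        (\sum_(v in S) a v - \sum_v a v * y2 z u v) ^+ 2.
Proof.
move=> z_sum1; rewrite -first_moment_y2 weighted_variance // second_moment_y3.
rewrite first_moment_y2 expr2 big_distrl -sumrB; apply: eq_bigr => v _.
rewrite big_distrr -sumrB; apply: eq_bigr => w _ /=.
by rewrite /ycov; ring.
Qed.

Lemma ycov_form_ge0 :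
  (forall S : {set V}, u \in S -> 0 <= z S) ->
  \sum_(S : {set V} | u \in S) z S = 1 ->
  0 <= \sum_v \sum_w a v * a w * ycov v w.
Proof.
move=> z_ge0 z_sum1; rewrite ycov_form_variance //.
by apply: sumr_ge0 => S uS; rewrite mulr_ge0 ?sqr_ge0 ?z_ge0.
Qed.

End ClusterMoments.

Section AggregatedKernel.
Variables (R : realFieldType) (V : finType) (t : nat).
Variables (P : 'I_t -> pred V) (g : V -> V -> R).

Definition aggregate_mx : 'M[R]_t :=
  \matrix_(j < t, k < t) \sum_(v | P j v) \sum_(w | P k w) g v w.

Lemma trmx_aggregate_mx :
  (forall v w, g v w = g w v) -> aggregate_mx^T = aggregate_mx.
Proof.
move=> gC; apply/matrixP => j k; rewrite !mxE exchange_big /=.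
by apply: eq_bigr => w _; apply: eq_bigr => v _; rewrite gC.
Qed.

Lemma aggregate_mx_form (c : 'cV[R]_t) :
  let a v := \sum_(j | P j v) c j 0 in
  (c^T *m aggregate_mx *m c) 0 0 = \sum_v \sum_w a v * a w * g v w.
Proof.
pose b j v := if P j v then c j 0 else 0.
have entry j k : c j 0 * aggregate_mx j k * c k 0 =
    \sum_v \sum_w b j v * b k w * g v w.
  rewrite mxE big_mkcond big_distrr big_distrl; apply: eq_bigr => v _ /=.
  rewrite /b; case: (P j v); last first.
    by rewrite mulr0 mul0r big1 // => w _; rewrite !mul0r.
  rewrite big_mkcond big_distrr big_distrl; apply: eq_bigr => w _ /=.
  by case: (P k w); rewrite ?mulr0 ?mul0r // mulrAC.
move=> a; have a_sum v : a v = \sum_j b j v by rewrite /a big_mkcond.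
rewrite mxE.
under eq_bigr do rewrite mxE big_distrl /=.
under eq_bigr do under eq_bigr do rewrite mxE entry.
under [RHS]eq_bigr do under eq_bigr do rewrite !a_sum big_distrlr big_distrl /=.
under [RHS]eq_bigr do under eq_bigr do under eq_bigr do rewrite big_distrl /=.
rewrite exchange_big /=.
under eq_bigr do rewrite exchange_big /=.
rewrite exchange_big /=; apply: eq_bigr => v _.
under eq_bigr do rewrite exchange_big /=.
by rewrite exchange_big.
Qed.

End AggregatedKernel.

Theorem lemma25 (R : realFieldType) (V : finType) (z : {set V} -> R)
  (x : V -> V -> R) (t : nat) (I : 'I_t -> interval R) (u : V) :
  cluster_LP_feasible z x -> interval_partition01 I -> psd (Qmat z I u).
Proof.
move=> [z_ge0 z_sum1 _ _] _.
change (psd (aggregate_mx (fun j v => y2 z u v \in I j) (ycov z u))).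
split; first by apply: trmx_aggregate_mx; apply: ycovC.
move=> c; rewrite aggregate_mx_form; apply: ycov_form_ge0 => // S uS.
by apply: z_ge0; apply/set0Pn; exists u.
Qed.
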